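(* Let $\mathcal{H}$ be a supersolvable arrangement of rank $n\ge3$ with decomposition $\mathcal{H}=\mathcal{H}_0\sqcup\mathcal{H}_1$ as in the definition of supersolvability. Then the graph of regions $G(\mathcal{H})$ is isomorphic to a graph that is $\ell$-suspended over $G(\mathcal{H}_0)$, where $\ell:=|\mathcal{H}_1|$.
   Context: A hyperplane arrangement is a finite set of linear hyperplanes in $\mathbb{R}^d$; its rank is the dimension of the span of the normals; its regions are the connected components of the complement of the union of the hyperplanes, and its graph of regions $G(\mathcal{H})$ has the regions as vertices, two adjacent iff separated by exactly one hyperplane. An arrangement of rank $n$ is supersolvable if $n\le 2$, or $n\ge 3$ and $\mathcal{H}=\mathcal{H}_0\sqcup\mathcal{H}_1$ with both parts nonempty, $\mathcal{H}_0$ supersolvable of rank $n-1$, and for any distinct $H',H''\in\mathcal{H}_1$ some $H\in\mathcal{H}_0$ satisfies $H'\cap H''\subseteq H$. For a graph $H=(V,E)$ and an integer $\ell\ge1$, let $P_\ell$ be the path on $0,1,\dots,\ell$ and $H\times P_\ell$ the Cartesian product (vertex set $V\times\{0,\dots,\ell\}$, with $(x,i)\sim(y,j)$ iff ($\{x,y\}\in E$ and $i=j$) or ($x=y$ and $|i-j|=1$)). A graph $G$ is $\ell$-suspended over $H$ if $G$ is a spanning subgraph of $H\times P_\ell$ that contains all edges $\{(x,i),(x,i+1)\}$ ($x\in V$, $0\le i<\ell$) and all edges $\{(x,0),(y,0)\}$ and $\{(x,\ell),(y,\ell)\}$ for $\{x,y\}\in E$. *)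

From HB Require Import structures.
From mathcomp Require Import all_boot all_order all_algebra.
From mathcomp Require Import all_classical all_reals all_analysis.
Set Implicit Arguments. Unset Strict Implicit. Unset Printing Implicit Defensive.
Import Order.TTheory GRing.Theory Num.Theory numFieldTopology.Exports.
Local Open Scope classical_set_scope.
Local Open Scope ring_scope.

Section Arrangements.
Variables (R : realType) (d : nat).
Implicit Types (a b : 'rV[R]_d) (H : seq 'rV[R]_d) (C D : set 'rV[R]_d).

Definition dotv (x a : 'rV[R]_d) : R := \sum_(i < d) x 0 i * a 0 i.

Definition hyp a : set 'rV[R]_d := [set x | dotv x a = 0].

(* A hyperplane arrangement is given by a list of normal vectors;
   it is well-formed when all normals are nonzero and distinct entries
   describe distinct hyperplanes (so the list is a finite set of
   hyperplanes without repetition). *)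
Definition arrangement H : Prop :=
  (forall a, a \in H -> a != 0) /\
  (forall i j, (i < size H)%N -> (j < size H)%N -> i <> j ->
     hyp (nth 0 H i) <> hyp (nth 0 H j)).

Definition arr_rank H : nat := \rank (\matrix_(i < size H) nth 0 H i).

Definition arr_complement H : set 'rV[R]_d :=
  [set x | forall a, a \in H -> ~ hyp a x].

Definition region H C : Prop :=
  exists2 x, arr_complement H x & C = connected_component (arr_complement H) x.

Definition hyp_separates a C D : Prop :=
  exists x y, [/\ C x, D y & dotv x a * dotv y a < 0].

Definition region_adj H C D : Prop :=
  [/\ region H C, region H D &
      exists2 a, a \in H &
        hyp_separates a C D /\
        (forall b, b \in H -> hyp_separates b C D -> hyp b = hyp a)].

(* decomposition H = H0 ⊔ H1 as in the definition of supersolvability,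
   except for the supersolvability of H0 itself *)
Definition ss_split H H0 H1 : Prop :=
  [/\ perm_eq H (H0 ++ H1), H0 != [::], H1 != [::],
      arr_rank H0 = (arr_rank H).-1 &
      forall a' a'', a' \in H1 -> a'' \in H1 -> hyp a' <> hyp a'' ->
        exists2 a, a \in H0 & hyp a' `&` hyp a'' `<=` hyp a].

Inductive supersolvable : seq 'rV[R]_d -> Prop :=
| ss_low H : (arr_rank H <= 2)%N -> supersolvable H
| ss_step H H0 H1 : (3 <= arr_rank H)%N -> ss_split H H0 H1 ->
    supersolvable H0 -> supersolvable H.

End Arrangements.

(* A graph E on vertex set V x {0,...,l} is l-suspended over the graph
   (V, adj): spanning subgraph of (V,adj) x P_l containing all vertical
   edges and the two copies of (V,adj) at levels 0 and l. *)
Definition suspended (T : Type) (V : set T) (adj : T -> T -> Prop) (l : nat)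
  (E : T * nat -> T * nat -> Prop) : Prop :=
  [/\ (forall x i y j, V x -> V y -> (i <= l)%N -> (j <= l)%N ->
         E (x, i) (y, j) ->
         (adj x y /\ i = j) \/ (x = y /\ (i = j.+1 \/ j = i.+1))),
      (forall x i, V x -> (i < l)%N -> E (x, i) (x, i.+1)),
      (forall x y, V x -> V y -> adj x y -> E (x, 0%N) (y, 0%N)) &
      (forall x y, V x -> V y -> adj x y -> E (x, l) (y, l))].

(* Choose v orthogonal to every normal of H0, which is possible since H0 has
   smaller rank than H.  If v lay on a hyperplane of H1, modularity would put
   that hyperplane inside one of H0; so the line y + R v meets each hyperplane h
   of H1, at t = - tau h y.  Modularity also makes the values tau h y (h in H1)
   pairwise distinct when y avoids H0, and as a region C of H0 is convex, their
   order is the same at every point of C.  Hence the regions of H inside C are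
   the sets C_i where exactly i of the tau h are positive (i = 0, ..., |H1|);
   consecutive ones are adjacent, and (C, i) |-> C_i is the isomorphism.  At
   the levels 0 and |H1| all the tau h have the same sign on both sides of an
   edge of G(H0), so these edges lift. *)

From HB Require Import structures.
From mathcomp Require Import all_boot all_order all_algebra.
From mathcomp Require Import all_classical all_reals all_analysis.
From mathcomp Require Import lra.
Set Implicit Arguments. Unset Strict Implicit. Unset Printing Implicit Defensive.
Import Order.TTheory GRing.Theory Num.Theory numFieldTopology.Exports.
Local Open Scope classical_set_scope.
Local Open Scope ring_scope.

Section Sign.
Variable R : realDomainType.
Implicit Types a b c : R.

Lemma mul_gt0_sign a b : a != 0 -> b != 0 -> (0 < a * b) = ((0 < a) == (0 < b)).
Proof.
move=> a0 b0; have [ap|an] := ltP 0 a; first by rewrite pmulr_rgt0.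
have an' : a < 0 by rewrite lt_neqAle a0.
by rewrite nmulr_rgt0 // ltNge le_eqVlt eq_sym (negbTE b0).
Qed.

Lemma ngt0_neq0 a : a != 0 -> ~~ (0 < a) = (a < 0).
Proof. by move=> a0; rewrite -leNgt le_eqVlt (negbTE a0). Qed.

Lemma mul_gt0_eq a b c : 0 < b * c -> (0 < a * b) = (0 < a * c).
Proof.
have [->|a0] := eqVneq a 0; first by rewrite !mul0r.
move=> bc; have b0 : b != 0 by apply: contraTneq bc => ->; rewrite mul0r ltxx.
have c0 : c != 0 by apply: contraTneq bc => ->; rewrite mulr0 ltxx.
by move: bc; rewrite !mul_gt0_sign // => /eqP ->.
Qed.

End Sign.

Section Dot.
Variables (R : realType) (d : nat).
Implicit Types (x y a b : 'rV[R]_d).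

Lemma dotvDl x y a : dotv (x + y) a = dotv x a + dotv y a.
Proof. by rewrite /dotv -big_split; apply: eq_bigr => i _; rewrite mxE mulrDl. Qed.

Lemma dotvZl k x a : dotv (k *: x) a = k * dotv x a.
Proof. by rewrite /dotv mulr_sumr; apply: eq_bigr => i _; rewrite mxE mulrA. Qed.

Lemma dotvBl x y a : dotv (x - y) a = dotv x a - dotv y a.
Proof. by rewrite dotvDl -scaleN1r dotvZl mulN1r. Qed.

Lemma dotvC x a : dotv x a = dotv a x.
Proof. by apply: eq_bigr => i _; rewrite mulrC. Qed.

Lemma dotvv_gt0 x : x != 0 -> 0 < dotv x x.
Proof.
move=> x0; rewrite lt_def sumr_ge0 ?andbT => [|i _]; last by rewrite -expr2 sqr_ge0.
apply: contra x0 => /eqP/psumr_eq0P x2; apply/eqP/rowP => j.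
by rewrite mxE; apply/eqP; rewrite -sqrf_eq0 expr2 x2 // => i _; rewrite -expr2 sqr_ge0.
Qed.

Lemma hyp_subset_eq a b : a != 0 -> b != 0 -> hyp a `<=` hyp b -> hyp a = hyp b.
Proof.
move=> a0 b0 sab; have aa := dotvv_gt0 a0; have bb := dotvv_gt0 b0.
(* every z splits as a multiple of a plus a vector of [hyp a] *)
have proj z : dotv z b = dotv z a / dotv a a * dotv a b.
  have : hyp b (z - (dotv z a / dotv a a) *: a).
    by apply: sab; rewrite /hyp /= dotvBl dotvZl mulfVK ?subrr // gt_eqF.
  by rewrite /hyp /= dotvBl dotvZl dotvC => /eqP; rewrite subr_eq0 => /eqP.
have ab : dotv a b != 0.
  by apply: contraTneq bb => ab0; rewrite proj ab0 mulr0 ltxx.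
apply/seteqP; split => // z; rewrite /hyp /= proj => /eqP.
by rewrite !mulf_eq0 invr_eq0 (negbTE ab) (gt_eqF aa) !orbF => /eqP.
Qed.

Lemma dotv_continuous a : continuous (fun x : 'rV[R]_d => dotv x a).
Proof.
rewrite /dotv; elim: (index_enum _) => [|i s IH].
  by under eq_fun do rewrite big_nil; exact: cst_continuous.
under eq_fun do rewrite big_cons.
move=> x; apply: continuousD (IH x); apply: continuousM; last exact: cst_continuous.
exact: coord_continuous.
Qed.

End Dot.

Section Cells.
Variables (R : realType) (d : nat) (K : seq 'rV[R]_d).
Implicit Types (x y z a b : 'rV[R]_d).

Local Notation S := (arr_complement K).

(* the open cone of points lying on the same side as x of every hyperplane of K;
   it is empty when x lies on one of them *)
Definition cell x : set 'rV[R]_d := [set y | forall a, a \in K -> 0 < dotv y a * dotv x a].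

Lemma complementP x : S x <-> forall a, a \in K -> dotv x a != 0.
Proof. by split=> Sx a /Sx; [move/eqP|move/eqP]. Qed.

Lemma cell_sub x : cell x `<=` S.
Proof.
by move=> y cy a /cy; rewrite /hyp /= => + ya0; rewrite ya0 mul0r ltxx.
Qed.

Lemma cell_sym x y : cell x y -> cell y x.
Proof. by move=> cy a /cy; rewrite mulrC. Qed.

Lemma cell_refl x : S x -> cell x x.
Proof. by move/complementP=> Sx a /Sx x0; rewrite mul_gt0_sign ?eqxx. Qed.

Lemma cell_eq x y : cell x y -> cell y = cell x.
Proof.
move=> cy; apply/seteqP; split=> z cz a aK; have := cz a aK.
  by rewrite (mul_gt0_eq _ (cy a aK)).
by rewrite (mul_gt0_eq _ (cell_sym cy aK)).
Qed.

Lemma cell_convex x y z t : cell x y -> cell x z -> 0 <= t <= 1 ->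
  cell x ((1 - t) *: y + t *: z).
Proof.
move=> cy cz /andP[t0 t1] a aK; move: (cy a aK) (cz a aK).
rewrite dotvDl !dotvZl mulrDl -!mulrA.
by move: (dotv y a * _) (dotv z a * _) => p q; nra.
Qed.

Lemma cell_connected x : connected (cell x).
Proof.
have [->|/set0P[y cy]] := eqVneq (cell x) set0; first exact: connected0.
(* a convex set is the union of the segments joining one of its points to the others *)
have -> : cell x = \bigcup_(z in cell x) ((fun t : R => y + t *: (z - y)) @` `[0, 1]).
  apply/seteqP; split => [z cz|_ [z cz [t t01 <-]]].
    exists z => //; exists 1; first by rewrite set_itvcc /= lexx ler01.
    by rewrite scale1r addrC subrK.
  have -> : y + t *: (z - y) = (1 - t) *: y + t *: z.
    by rewrite scalerBr scalerBl scale1r addrA addrAC.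
  by apply: cell_convex => //; move: t01; rewrite set_itvcc.
apply: bigcup_connected.
  exists y => z _; exists 0; first by rewrite set_itvcc /= lexx ler01.
  by rewrite scale0r addr0.
move=> z _; apply: connected_continuous_connected; first exact: segment_connected.
apply: continuous_subspaceT => t.
apply: (continuousD (f := fun=> y) (g := fun t : R => t *: (z - y))).
  exact: cst_continuous.
exact: scalel_continuous.
Qed.

Lemma connected_component_cell x : S x -> connected_component S x = cell x.
Proof.
move=> Sx; apply/seteqP; split; last first.
  by apply: connected_component_max; [exact: cell_refl|exact: cell_sub|exact: cell_connected].
set Q := connected_component S x => y Qy a aK; pose g z := dotv z a * dotv x a.
have g_neq0 z : Q z -> g z != 0.
  move=> /connected_component_sub/complementP/(_ a aK) za.
  by rewrite mulf_neq0 //; exact: (complementP x).1 Sx a aK.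
have cg : continuous g.
  move=> z; apply: (continuousM (s := fun z => dotv z a) (t := fun=> dotv x a)).
    exact: dotv_continuous.
  exact: cst_continuous.
(* Q meets the open set [0 < g] and the closed set [0 <= g] in the same set *)
suff QgQ : Q `&` [set z | 0 < g z] = Q by move: Qy; rewrite -QgQ => -[].
apply: component_connected.
- by exists x; split; [exact: connected_component_refl|exact: cell_refl].
- exists (g @^-1` [set r | 0 < r]) => //.
  by apply: open_comp; [move=> z _; exact: cg|exact: open_gt].
- exists (g @^-1` [set r | 0 <= r]).
    by apply: preimage_closed; [move=> z _; exact: cg|exact: closed_ge].
  apply/seteqP; split=> z [Qz gz]; split=> //=; first exact: ltW.
  by rewrite lt_def g_neq0.
Qed.

Lemma regionP C : region K C <-> exists2 x, S x & C = cell x.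
Proof. by split=> -[x Sx ->]; exists x => //; rewrite connected_component_cell. Qed.

Lemma separates_cellP x y b : S x -> S y -> b \in K ->
  hyp_separates b (cell x) (cell y) <-> dotv x b * dotv y b < 0.
Proof.
move=> Sx Sy bK; split; last by exists x, y; split; [exact: cell_refl|exact: cell_refl|].
move=> [u [w [cu cw uw]]]; have := cu b bK; have := cw b bK; nra.
Qed.

End Cells.

Section Count.
Variable T : eqType.
Implicit Types (s : seq T) (p q r : pred T).

Lemma count_sub_in s p q : {in s, forall x, q x -> p x} ->
  count p s = (count q s + count (predD p q) s)%N.
Proof.
move=> qp; rewrite -size_filter -(count_predC q) !count_filter; congr (_ + _)%N.
by apply: eq_in_count => x xs /=; case: (boolP (q x)) => //= /(qp x xs).
Qed.

Lemma count_gt1 s r x y : uniq s -> x \in s -> y \in s -> x != y -> r x -> r y ->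
  (1 < count r s)%N.
Proof.
move=> us xs ys xy rx ry; rewrite (permP (perm_to_rem xs)) /= rx add1n ltnS -has_count.
by apply/hasP; exists y; rewrite // mem_rem_uniq // inE eq_sym xy.
Qed.

Lemma count_differ1 s p q a : uniq s -> a \in s -> {in s, forall x, x != a -> p x = q x} ->
  p a != q a -> count p s = (count q s).+1 \/ count q s = (count p s).+1.
Proof.
move=> us a_s pq pqa; rewrite !(permP (perm_to_rem a_s)) /=.
have -> : count p (rem a s) = count q (rem a s).
  by apply: eq_in_count => x; rewrite mem_rem_uniq // inE => /andP[xa xs]; exact: pq.
by case: (p a) (q a) pqa => [] [] // _; [left|right]; rewrite /= add1n add0n.
Qed.

End Count.

Section Thresholds.
Variable R : realFieldType.
Implicit Types s : seq R.

Lemma sorted_count_lt s b i : sorted <%R s -> {in s, forall x, b < x} -> (i <= size s)%N ->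
  exists t, [/\ t \notin s, b < t & count (fun x => x < t) s = i].
Proof.
elim: s b i => [|m s IH] b i srt sb.
  by rewrite leqn0 => /eqP ->; exists (b + 1); split => //; lra.
have ms : {in s, forall x, m < x} by apply/allP; exact: order_path_min lt_trans srt.
have bm : b < m by apply: sb; exact: mem_head.
case: i => [_|i].
  exists ((b + m) / 2); split; [|lra|].
    by rewrite inE negb_or lt_eqF ?andTb; [apply/negP => /ms|]; lra.
  apply/eqP; rewrite -leqn0 leqNgt -has_count; apply/hasP => -[x].
  by rewrite inE => /orP[/eqP ->|/ms]; lra.
rewrite ltnS => isz; have [t [ts mt ct]] := IH m i (path_sorted srt) ms isz.
exists t; split; [by rewrite inE negb_or ts gt_eqF|exact: lt_trans mt|by rewrite /= mt ct].
Qed.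

Lemma uniq_count_lt s i : uniq s -> (i <= size s)%N ->
  exists2 t, t \notin s & count (fun x => x < t) s = i.
Proof.
move=> us isz; have ps : perm_eq (sort <=%O s) s by rewrite perm_sort.
have srt : sorted <%R (sort <=%O s) by rewrite sort_lt_sorted.
have [b sb] : exists b, {in sort <=%O s, forall x, b < x}.
  exists (- \sum_(x <- s) `|x| - 1) => x; rewrite (perm_mem ps) => xs.
  have : `|x| <= \sum_(y <- s) `|y| by rewrite (big_rem x xs) lerDl sumr_ge0.
  have := ler_norm (- x); rewrite normrN; lra.
have [|t [ts _ ct]] := sorted_count_lt srt sb (i := i); first by rewrite (perm_size ps).
by exists t; [rewrite -(perm_mem ps)|rewrite -(permP ps)].
Qed.

Lemma linear_crossing (a b c e : R) : a < b -> e < c ->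
  exists2 t, 0 <= t <= 1 & (1 - t) * a + t * c = (1 - t) * b + t * e.
Proof.
move=> ab ec; have D0 : 0 < (b - a) + (c - e) by lra.
have [t tD] : exists t, t * ((b - a) + (c - e)) = b - a.
  by exists ((b - a) / ((b - a) + (c - e))); rewrite mulfVK // gt_eqF.
by exists t; [apply/andP; split|]; nra.
Qed.

End Thresholds.

Section Arrangement.
Variables (R : realType) (d : nat) (K : seq 'rV[R]_d).

Definition normal_mx := \matrix_(i < size K) nth 0 K i.

Lemma normal_mx_sub a : a \in K -> (a <= normal_mx)%MS.
Proof.
move=> aK; have iK : (index a K < size K)%N by rewrite index_mem.
by rewrite -(nth_index 0 aK) -(rowK (fun i => nth 0 K i) (Ordinal iK)) row_sub.
Qed.

Hypothesis arrK : arrangement K.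

Lemma arrangement_neq0 a : a \in K -> a != 0.
Proof. by case: arrK => + _; apply. Qed.

Lemma arrangement_uniq : uniq K.
Proof.
apply/(uniqPn 0) => -[i [j [ij jK eq_ij]]]; case: arrK => _ /(_ i j).
by apply=> //; [exact: ltn_trans jK|move=> e; rewrite e ltnn in ij|rewrite eq_ij].
Qed.

Lemma arrangement_hyp_inj : {in K &, injective (@hyp R d)}.
Proof.
move=> a b aK bK eab; apply/eqP/negPn/negP => nab.
case: arrK => _ /(_ (index a K) (index b K)); rewrite !index_mem !nth_index //.
by apply=> // /(congr1 (nth 0 K)); rewrite !nth_index // => /eqP; apply/negP.
Qed.

End Arrangement.

Section Split.
Variables (R : realType) (d : nat) (H H0 H1 : seq 'rV[R]_d).
Hypotheses (arrH : arrangement H) (permH : perm_eq H (H0 ++ H1)).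
Hypothesis modH : forall a' a'', a' \in H1 -> a'' \in H1 -> hyp a' <> hyp a'' ->
  exists2 a, a \in H0 & hyp a' `&` hyp a'' `<=` hyp a.

Lemma mem_split a : (a \in H) = (a \in H0) || (a \in H1).
Proof. by rewrite (perm_mem permH) mem_cat. Qed.

Lemma H0_subset : {subset H0 <= H}.
Proof. by move=> a; rewrite mem_split => ->. Qed.

Lemma H1_subset : {subset H1 <= H}.
Proof. by move=> a; rewrite mem_split orbC => ->. Qed.

Lemma uniq_split : uniq (H0 ++ H1).
Proof. by rewrite -(perm_uniq permH) arrangement_uniq. Qed.

Lemma H0_H1_disjoint a : a \in H0 -> a \in H1 -> False.
Proof.
move=> a0 a1; have := uniq_split; rewrite cat_uniq => /and3P[_ /hasPn/(_ a a1) + _].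
by rewrite a0.
Qed.

Lemma H1_uniq : uniq H1.
Proof. by have := uniq_split; rewrite cat_uniq => /and3P[]. Qed.

Lemma modular_line w h h' : {in H0, forall a, dotv w a = 0} -> h \in H1 -> h' \in H1 ->
  h != h' -> exists2 a, a \in H0 &
    forall u t, hyp h (u + t *: w) -> hyp h' (u + t *: w) -> hyp a u.
Proof.
move=> w0 hH h'H hh'; have [|a aH0 sub] := modH hH h'H.
  by move/(arrangement_hyp_inj arrH (H1_subset hH) (H1_subset h'H))/eqP; exact/negP.
exists a => // u t uh uh'; have := sub _ (conj uh uh').
by rewrite /hyp /= dotvDl dotvZl w0 // mulr0 addr0.
Qed.

Lemma direction_off_H1 w h1 : {in H0, forall a, dotv w a = 0} -> h1 \in H1 ->
  dotv w h1 != 0 -> {in H1, forall h, dotv w h != 0}.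
Proof.
move=> w0 h1H wh1 h hH; apply/negP => /eqP wh.
have hh1 : h != h1 by apply: contraTneq wh1 => <-; rewrite wh eqxx.
have [a aH0 sub] := modular_line w0 hH h1H hh1.
(* moving along w stays in hyp h and reaches hyp h1 *)
have : hyp h `<=` hyp a.
  move=> y yh; apply: (sub y (- (dotv y h1 / dotv w h1))).
    by rewrite /hyp /= dotvDl dotvZl wh mulr0 addr0.
  by rewrite /hyp /= dotvDl dotvZl mulNr mulfVK // subrr.
have [hH' aH'] := (H1_subset hH, H0_subset aH0).
move/(hyp_subset_eq (arrangement_neq0 arrH hH') (arrangement_neq0 arrH aH')).
by move/(arrangement_hyp_inj arrH hH' aH') => eha; apply: (H0_H1_disjoint aH0); rewrite -eha.
Qed.

Lemma exists_direction : (arr_rank H0 < arr_rank H)%N ->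
  exists v, {in H0, forall a, dotv v a = 0} /\ {in H1, forall h, dotv v h != 0}.
Proof.
move=> rk; set M0 := normal_mx H0.
have [h1 h1H h1M0] : exists2 h1, h1 \in H1 & ~~ (h1 <= M0)%MS.
  apply: contrapT => allM0; move: rk; rewrite ltnNge => /negP; apply; apply: mxrankS.
  apply/row_subP => i; rewrite rowK; have := mem_nth 0 (ltn_ord i).
  rewrite mem_split => /orP[/normal_mx_sub //|hH]; apply: contrapT => nM0.
  by apply: allM0; exists (nth 0 H i) => //; exact/negP.
have /existsP[j h1j] : [exists j, (h1 *m cokermx M0) 0 j != 0].
  apply: contraR h1M0 => /existsPn h10; rewrite submxE; apply/eqP/rowP => j.
  by rewrite [RHS]mxE; apply/eqP/negbNE; exact: h10.
pose v := \row_k cokermx M0 k j.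
have dotv_v a : dotv v a = (a *m cokermx M0) 0 j.
  by rewrite /dotv !mxE; apply: eq_bigr => k _; rewrite mxE mulrC.
have vH0 : {in H0, forall a, dotv v a = 0}.
  by move=> a /normal_mx_sub; rewrite submxE dotv_v => /eqP ->; rewrite mxE.
by exists v; split => //; apply: (direction_off_H1 vH0 h1H); rewrite dotv_v.
Qed.

Section Suspension.
Variable v : 'rV[R]_d.
Hypotheses (vH0 : {in H0, forall a, dotv v a = 0}) (vH1 : {in H1, forall h, dotv v h != 0}).

Local Notation S := (arr_complement H).
Local Notation S0 := (arr_complement H0).

(* the line y + t v meets hyp h at t = - tau h y *)
Definition tau h y := dotv y h / dotv v h.
Definition above y h := 0 < tau h y.
Definition level y := count (above y) H1.

Lemma complement_split y : S y <-> S0 y /\ {in H1, forall h, dotv y h != 0}.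
Proof.
rewrite !complementP; split=> [Sy|[S0y yH1] a].
  by split=> a aH; apply: Sy; [exact: H0_subset|exact: H1_subset].
by rewrite mem_split => /orP[/S0y|/yH1].
Qed.

Lemma dotv_tau h y : h \in H1 -> dotv y h = tau h y * dotv v h.
Proof. by move=> hH; rewrite /tau mulfVK // vH1. Qed.

Lemma tau_shift h y t : h \in H1 -> tau h (y + t *: v) = tau h y + t.
Proof. by move=> hH; rewrite /tau dotvDl dotvZl mulrDl mulfK // vH1. Qed.

Lemma tau_comb h y z s : tau h ((1 - s) *: y + s *: z) = (1 - s) * tau h y + s * tau h z.
Proof. by rewrite /tau dotvDl !dotvZl mulrDl !mulrA. Qed.

Lemma tau_neq0 h y : S y -> h \in H1 -> tau h y != 0.
Proof.
by move=> /complement_split[_ yH1] hH; rewrite mulf_neq0 ?invr_neq0 ?(yH1 h hH) ?(vH1 hH).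
Qed.

Lemma not_above_lt0 h y : S y -> h \in H1 -> ~~ above y h -> tau h y < 0.
Proof. by move=> Sy hH; rewrite /above -leNgt lt_neqAle tau_neq0. Qed.

Lemma above_eq_side h y z : S y -> S z -> h \in H1 ->
  (above y h == above z h) = (0 < dotv z h * dotv y h).
Proof.
move=> Sy Sz hH; rewrite (dotv_tau z hH) (dotv_tau y hH) mulrACA pmulr_lgt0; last first.
  by rewrite mul_gt0_sign ?eqxx ?(vH1 hH).
by rewrite mul_gt0_sign ?tau_neq0 // eq_sym.
Qed.

Lemma above_neq_side h y z : S y -> S z -> h \in H1 ->
  (above y h != above z h) = (dotv z h * dotv y h < 0).
Proof.
move=> Sy Sz hH; have /complement_split[_ /(_ h hH) yh] := Sy.
have /complement_split[_ /(_ h hH) zh] := Sz.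
by rewrite -ngt0_neq0 ?mulf_neq0 // -above_eq_side.
Qed.

Lemma cell_split y z : S y -> S z ->
  cell H y z <-> cell H0 y z /\ {in H1, forall h, above y h = above z h}.
Proof.
move=> Sy Sz; split=> [cz|[cz yz] a].
  split=> [a /H0_subset|h hH]; first exact: cz.
  by apply/eqP; rewrite above_eq_side //; exact/cz/H1_subset.
by rewrite mem_split => /orP[/cz //|hH]; rewrite -above_eq_side // yz.
Qed.

(* otherwise the point of the line u + R v lying on both hyperplanes would lie
   on a hyperplane of H0 by modularity, and so would u *)
Lemma tau_neq u h h' : S0 u -> h \in H1 -> h' \in H1 -> h != h' -> tau h u != tau h' u.
Proof.
move=> S0u hH h'H hh'; apply/eqP => e; have [a aH0 sub] := modular_line vH0 hH h'H hh'.
apply: (S0u a aH0); apply: (sub u (- tau h u)).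
  by rewrite /hyp /= (dotv_tau _ hH) (tau_shift _ _ hH) subrr mul0r.
by rewrite /hyp /= (dotv_tau _ h'H) (tau_shift _ _ h'H) e subrr mul0r.
Qed.

Lemma tau_lt_cell y z h h' : S0 y -> cell H0 y z -> h \in H1 -> h' \in H1 ->
  tau h y < tau h' y -> tau h z < tau h' z.
Proof.
move=> S0y cz hH h'H lty; have hh' : h != h' by apply: contraTneq lty => ->; rewrite ltxx.
have [//|gtz|eqz] := ltgtP (tau h z) (tau h' z); last first.
  by move: (tau_neq (cell_sub cz) hH h'H hh'); rewrite eqz eqxx.
have [t t01 e] := linear_crossing lty gtz.
have := tau_neq (cell_sub (cell_convex (cell_refl S0y) cz t01)) hH h'H hh'.
by rewrite !tau_comb e eqxx.
Qed.

Lemma above_nested y z h h' : S y -> S z -> cell H0 y z -> h \in H1 -> h' \in H1 ->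
  above y h -> ~~ above z h -> above z h' -> above y h'.
Proof.
move=> Sy Sz cz hH h'H yh zh zh'; apply/negPn/negP => yh'.
have /complement_split[S0y _] := Sy.
have := tau_lt_cell S0y cz h'H hH (lt_trans (not_above_lt0 Sy h'H yh') yh).
by rewrite ltNge (ltW (lt_trans (not_above_lt0 Sz hH zh) zh')).
Qed.

Lemma above_sub y z : S y -> S z -> cell H0 y z -> (level y <= level z)%N ->
  {in H1, forall h, above y h -> above z h}.
Proof.
move=> Sy Sz cz le h hH yh; apply/negPn/negP => zh.
have zy : {in H1, forall h', above z h' -> above y h'}.
  by move=> h' h'H; exact: above_nested Sy Sz cz hH h'H yh zh.
have : (0 < count (predD (above y) (above z)) H1)%N.
  by rewrite -has_count; apply/hasP; exists h => //=; rewrite zh.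
by move: le; rewrite /level (count_sub_in zy) -{2}[count _ _]addn0 leq_add2l leqn0 => /eqP->.
Qed.

Lemma level_eq_above y z : S y -> S z -> cell H0 y z -> level y = level z ->
  {in H1, forall h, above y h = above z h}.
Proof.
move=> Sy Sz cz e h hH; apply/idP/idP; apply: above_sub => //; rewrite ?e //.
exact: cell_sym.
Qed.

Lemma exists_level x i : S0 x -> (i <= size H1)%N ->
  exists y, [/\ S y, cell H0 x y & level y = i].
Proof.
move=> S0x isz; set T := [seq - tau h x | h <- H1].
have [t tT ct] : exists2 t, t \notin T & count (fun r => r < t) T = i.
  apply: uniq_count_lt; last by rewrite size_map.
  rewrite map_inj_in_uniq ?H1_uniq // => h h' hH h'H /oppr_inj e.
  by case: (eqVneq h h') => // /(tau_neq S0x hH h'H); rewrite e eqxx.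
pose y := x + t *: v.
have yH0 a : a \in H0 -> dotv y a = dotv x a.
  by move=> aH0; rewrite dotvDl dotvZl vH0 // mulr0 addr0.
have Sy : S y.
  apply/complement_split; split=> [|h hH].
    by move=> a aH0; rewrite /hyp /= yH0 //; exact: S0x.
  rewrite (dotv_tau _ hH) mulf_neq0 ?(vH1 hH) // (tau_shift _ _ hH).
  by apply: contraNneq tT => e; apply/mapP; exists h => //; apply/eqP; rewrite -addr_eq0 addrC e.
exists y; split => //; first by move=> a aH0; rewrite yH0 //; exact: cell_refl S0x a aH0.
rewrite /level -ct count_map; apply: eq_in_count => h hH /=.
by rewrite /above (tau_shift _ _ hH) -[RHS]subr_gt0 opprK addrC.
Qed.

Definition level_rep C i := xget 0 [set y | [/\ S y, C y & level y = i]].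

Lemma level_repP C i : region H0 C -> (i <= size H1)%N ->
  [/\ S (level_rep C i), C = cell H0 (level_rep C i) & level (level_rep C i) = i].
Proof.
move=> /regionP[x S0x ->] isz; have [y yP] := exists_level S0x isz.
have /(xgetPex 0) [Sr cr lr] : exists y, [set y | [/\ S y, cell H0 x y & level y = i]] y.
  by exists y.
by split => //; rewrite (cell_eq cr).
Qed.

Definition susp_region (p : set 'rV[R]_d * nat) := cell H (level_rep p.1 p.2).

Lemma region_adj_lift y z : S y -> S z -> {in H1, forall h, above y h = above z h} ->
  region_adj H0 (cell H0 y) (cell H0 z) -> region_adj H (cell H y) (cell H z).
Proof.
move=> Sy Sz yz [_ _ [a aH0 [sep0 uniq0]]].
have /complement_split[S0y _] := Sy; have /complement_split[S0z _] := Sz.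
split; [by apply/regionP; exists y|by apply/regionP; exists z|].
exists a; first exact: H0_subset.
split=> [|b bH /(separates_cellP Sy Sz bH) sep].
  exact/(separates_cellP Sy Sz (H0_subset aH0))/(separates_cellP S0y S0z aH0).
move: bH; rewrite mem_split => /orP[bH0|bH1].
  by apply: uniq0 => //; apply/(separates_cellP S0y S0z bH0).
by move: sep; rewrite mulrC -above_neq_side // (yz b bH1) eqxx.
Qed.

Lemma region_adj_sep y z : S y -> S z -> region_adj H (cell H y) (cell H z) ->
  exists2 a, a \in H &
    dotv z a * dotv y a < 0 /\ {in H, forall b, b != a -> 0 < dotv z b * dotv y b}.
Proof.
move=> Sy Sz [_ _ [a aH [/(separates_cellP Sy Sz aH) sep uniqa]]].
exists a => //; split=> [|b bH ba]; first by rewrite mulrC.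
have /complementP/(_ b bH) yb := Sy; have /complementP/(_ b bH) zb := Sz.
rewrite -[0 < _]negbK ngt0_neq0 ?mulf_neq0 // mulrC.
apply/negP => /(separates_cellP Sy Sz bH)/(uniqa b bH).
by move/(arrangement_hyp_inj arrH bH aH)/eqP; exact/negP.
Qed.

Lemma above_level0 y h : level y = 0%N -> h \in H1 -> above y h = false.
Proof.
move=> y0 hH; apply/negbTE/negP => yh.
have : has (above y) H1 by apply/hasP; exists h.
by rewrite has_count -/(level y) y0.
Qed.

Lemma above_level_max y h : level y = size H1 -> h \in H1 -> above y h.
Proof. by move/eqP; rewrite -all_count => /allP; apply. Qed.

Lemma susp_regionP C i : region H0 C -> (i <= size H1)%N ->
  exists2 y, [/\ S y, C = cell H0 y & level y = i] & susp_region (C, i) = cell H y.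
Proof. by move=> rC isz; exists (level_rep C i); first exact: level_repP. Qed.

Lemma susp_region_region C i : region H0 C -> (i <= size H1)%N -> region H (susp_region (C, i)).
Proof. by move=> rC isz; have [y [Sy _ _] ->] := susp_regionP rC isz; apply/regionP; exists y. Qed.

Lemma susp_region_inj C i D j : region H0 C -> (i <= size H1)%N ->
  region H0 D -> (j <= size H1)%N -> susp_region (C, i) = susp_region (D, j) -> C = D /\ i = j.
Proof.
move=> rC isz rD jsz; have [y [Sy -> <-] ->] := susp_regionP rC isz.
have [z [Sz -> <-] ->] := susp_regionP rD jsz => eyz.
have /(cell_split Sy Sz)[c0 yz] : cell H y z by rewrite eyz; exact: cell_refl.
by split; [rewrite (cell_eq c0)|exact: eq_in_count].
Qed.

Lemma susp_region_surj D : region H D ->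
  exists2 C, region H0 C & exists2 i, (i <= size H1)%N & D = susp_region (C, i).
Proof.
move=> /regionP[y Sy ->]; have /complement_split[S0y _] := Sy.
have rC : region H0 (cell H0 y) by apply/regionP; exists y.
exists (cell H0 y) => //; exists (level y); first exact: count_size.
have [z [Sz ez lz] ->] := susp_regionP (i := level y) rC (count_size _ _).
have /complement_split[S0z _] := Sz.
have cz : cell H0 y z by rewrite ez; exact: cell_refl.
apply/esym/cell_eq/(cell_split Sy Sz); split=> //; exact: level_eq_above Sy Sz cz (esym lz).
Qed.

Lemma susp_adj_edges C i D j : region H0 C -> region H0 D ->
  (i <= size H1)%N -> (j <= size H1)%N -> region_adj H (susp_region (C, i)) (susp_region (D, j)) ->
  (region_adj H0 C D /\ i = j) \/ (C = D /\ (i = j.+1 \/ j = i.+1)).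
Proof.
move=> rC rD isz jsz; have [y [Sy -> <-] ->] := susp_regionP rC isz.
have [z [Sz -> <-] ->] := susp_regionP rD jsz.
move=> /(region_adj_sep Sy Sz)[a aH [sep same]].
have /complement_split[S0y _] := Sy; have /complement_split[S0z _] := Sz.
move: aH; rewrite mem_split => /orP[aH0|aH1].
  left; split; last first.
    apply: eq_in_count => h hH; apply/eqP; rewrite above_eq_side //.
    apply: same; first exact: H1_subset hH.
    by apply: contraTneq hH => ->; apply/negP; exact: H0_H1_disjoint aH0.
  split; [by apply/regionP; exists y|by apply/regionP; exists z|exists a => //].
  split=> [|b bH0 /(separates_cellP S0y S0z bH0) sepb].
    by apply/(separates_cellP S0y S0z aH0); rewrite mulrC.
  have [-> //|ba] := eqVneq b a.
  by move: (same b (H0_subset bH0) ba); rewrite mulrC ltNge (ltW sepb).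
right; split.
  apply/esym/cell_eq => b bH0; apply: same; first exact: H0_subset bH0.
  by apply: contraTneq bH0 => ->; apply/negP => /H0_H1_disjoint/(_ aH1).
apply: (count_differ1 H1_uniq aH1); last by rewrite above_neq_side.
by move=> h hH ha; apply/eqP; rewrite above_eq_side //; exact: same (H1_subset hH) ha.
Qed.

Lemma susp_adj_vertical C i : region H0 C -> (i < size H1)%N ->
  region_adj H (susp_region (C, i)) (susp_region (C, i.+1)).
Proof.
move=> rC isz; have [y [Sy eC ly] ->] := susp_regionP rC (ltnW isz).
have [z [Sz eC' lz] ->] := susp_regionP rC isz.
have /complement_split[S0z _] := Sz.
have cz : cell H0 y z by rewrite -eC eC'; exact: cell_refl.
have yz : {in H1, forall h, above y h -> above z h}.
  by apply: above_sub => //; rewrite ly lz.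
have D1 : count (predD (above z) (above y)) H1 = 1%N.
  by apply/(@addnI i); rewrite addn1 -lz -ly /level (count_sub_in yz).
have [h hH /andP[yh zh]] : exists2 h, h \in H1 & predD (above z) (above y) h.
  by apply/hasP; rewrite has_count D1.
split; [by apply/regionP; exists y|by apply/regionP; exists z|exists h; first exact: H1_subset].
split=> [|b bH /(separates_cellP Sy Sz bH) sepb].
  by apply/(separates_cellP Sy Sz (H1_subset hH)); rewrite mulrC -above_neq_side // (negbTE yh) zh.
move: bH; rewrite mem_split => /orP[bH0|bH1].
  by move: (cz b bH0); rewrite mulrC ltNge (ltW sepb).
have Db : predD (above z) (above y) b.
  move: sepb; rewrite mulrC -above_neq_side //=.
  by case: (above y b) (above z b) (yz b bH1) => [] [].
have [-> //|bh] := eqVneq b h.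
by have := count_gt1 H1_uniq bH1 hH bh Db (introT andP (conj yh zh)); rewrite D1.
Qed.

Lemma susp_adj_extreme C D i : i = 0%N \/ i = size H1 -> region_adj H0 C D ->
  region_adj H (susp_region (C, i)) (susp_region (D, i)).
Proof.
move=> iext adj; have [rC rD _] := adj; have isz : (i <= size H1)%N by case: iext => ->.
have [y [Sy eC ly] ->] := susp_regionP rC isz; have [z [Sz eD lz] ->] := susp_regionP rD isz.
apply: region_adj_lift => //; last by rewrite -eC -eD.
move=> h hH; case: iext => ie; rewrite ie in ly lz.
  by rewrite !above_level0.
by rewrite !above_level_max.
Qed.

Lemma suspension_iso : exists f : set 'rV[R]_d * nat -> set 'rV[R]_d,
    [/\ (forall C i, region H0 C -> (i <= size H1)%N -> region H (f (C, i))),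
        (forall C i D j, region H0 C -> (i <= size H1)%N ->
           region H0 D -> (j <= size H1)%N ->
           f (C, i) = f (D, j) -> C = D /\ i = j),
        (forall D, region H D ->
           exists2 C, region H0 C & exists2 i, (i <= size H1)%N & D = f (C, i)) &
        suspended (region H0) (region_adj H0) (size H1)
          (fun u v => region_adj H (f u) (f v))].
Proof.
exists susp_region.
split; [exact: susp_region_region|exact: susp_region_inj|exact: susp_region_surj|].
split; [exact: susp_adj_edges|exact: susp_adj_vertical| |].
  by move=> C D _ _; apply: susp_adj_extreme; left.
by move=> C D _ _; apply: susp_adj_extreme; right.
Qed.

End Suspension.
End Split.

Theorem lemma3p1 (R : realType) (d : nat) (H H0 H1 : seq 'rV[R]_d) :
  arrangement H ->
  (3 <= arr_rank H)%N ->
  ss_split H H0 H1 ->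
  supersolvable H0 ->
  exists f : set 'rV[R]_d * nat -> set 'rV[R]_d,
    [/\ (forall C i, region H0 C -> (i <= size H1)%N -> region H (f (C, i))),
        (forall C i D j, region H0 C -> (i <= size H1)%N ->
           region H0 D -> (j <= size H1)%N ->
           f (C, i) = f (D, j) -> C = D /\ i = j),
        (forall D, region H D ->
           exists2 C, region H0 C & exists2 i, (i <= size H1)%N & D = f (C, i)) &
        suspended (region H0) (region_adj H0) (size H1)
          (fun u v => region_adj H (f u) (f v))].
Proof.
move=> arrH rk3 [permH _ _ rk0 modH] _.
have [|v [vH0 vH1]] := exists_direction arrH permH modH.
  by rewrite rk0 ltn_predL (leq_trans _ rk3).
exact (suspension_iso arrH permH modH vH0 vH1).
Qed.
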